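(* Let $\beta_1,\dots,\beta_N\in\mathbb R$ with $\beta_a\beta_b\ne0$ for some $a,b$. Then $\widetilde C_\beta$ is an orthogonal projection if and only if $(d-1)\sum_{i=1}^N\beta_i^2+\big(\sum_{i=1}^N\beta_i\big)^2=1$. If this condition holds, then $C_\beta\ge0$ and $\mathrm{Tr}_{\{1,\dots,N\}}C_\beta=I$, so $C_\beta$ is the Choi matrix of a quantum channel $\mathcal M_d\to\mathcal M_d^{\otimes N}$.
   Context: Fix $d\ge2$, $N\ge1$. Tensor factors of $(\mathbb C^d)^{\otimes(N+1)}$ are labelled $0,\dots,N$. For a permutation $\sigma$ of $\{0,\dots,N\}$, $\Pi_\sigma(v_0\otimes\cdots\otimes v_N)=v_{\sigma^{-1}(0)}\otimes\cdots\otimes v_{\sigma^{-1}(N)}$ and $\Pi_\sigma^\Gamma$ is its partial transpose on factor $0$ in the standard basis. For $1\le a,b\le N$, $\Sigma_{a,b}=\{\sigma:\sigma(0)=a,\sigma(b)=0\}$. Define $\widetilde C_\beta=\sum_{1\le a,b\le N}\sum_{\sigma\in\Sigma_{a,b}}\frac{\beta_a\beta_b}{(N-1)!}\Pi_\sigma^\Gamma$ and $C_\beta=\frac{d}{\binom{N+d-1}{N}}\frac{N+d-1}{N}\widetilde C_\beta$. A matrix $C$ is the Choi matrix of a quantum channel iff $C\ge0$ and its partial trace over factors $1,\dots,N$ is $I$ (factor $0$ being the input). *)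

From HB Require Import structures.
From mathcomp Require Import all_boot all_order all_algebra all_fingroup.
Set Implicit Arguments. Unset Strict Implicit. Unset Printing Implicit Defensive.
Import Order.TTheory GRing.Theory Num.Theory.
Local Open Scope ring_scope.

(* Complex scalars: any numClosedFieldType C (e.g. the complex numbers).
   Basis of (C^d)^{\otimes(N+1)}: functions x : 'I_(N.+1) -> 'I_d
   (x k = basis index in tensor factor k; factor 0 is ord0).
   Operators are matrices indexed by the ranks of these basis labels. *)

Section Defs.
Variables (C : numClosedFieldType) (d N : nat).

Definition lbl := {ffun 'I_N.+1 -> 'I_d}.
Definition dim := #|{: lbl}|.
Definition op := 'M[C]_dim.

Definition mkop (f : lbl -> lbl -> C) : op :=
  \matrix_(i, j) f (enum_val i) (enum_val j).
Definition ent (M : op) (x y : lbl) : C := M (enum_rank x) (enum_rank y).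

(* Pi_sigma (v_0 ⊗ ... ⊗ v_N) = v_{sigma^-1 0} ⊗ ... ⊗ v_{sigma^-1 N},
   so <x|Pi_sigma|y> = [forall k, x k = y (sigma^-1 k)] *)
Definition Pi (s : 'S_N.+1) : op :=
  mkop (fun x y => (x == [ffun k => y ((s^-1)%g k)])%:R).

Definition upd0 (x : lbl) (i : 'I_d) : lbl :=
  [ffun k => if k == ord0 then i else x k].

Definition ptrans0 (M : op) : op :=
  mkop (fun x y => ent M (upd0 x (y ord0)) (upd0 y (x ord0))).

(* Sigma_{a,b} = {sigma : sigma 0 = a, sigma b = 0}, with a,b in {1..N}
   represented as lift ord0 a', lift ord0 b' for a',b' : 'I_N *)
Definition Ctilde (beta : 'I_N -> C) : op :=
  \sum_(a < N) \sum_(b < N)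
    \sum_(s : 'S_N.+1 | (s ord0 == lift ord0 a) && (s (lift ord0 b) == ord0))
      ((beta a * beta b) / (N.-1)`!%:R) *: ptrans0 (Pi s).

Definition Cbeta (beta : 'I_N -> C) : op :=
  (d%:R / 'C(N + d - 1, N)%:R * ((N + d - 1)%:R / N%:R)) *: Ctilde beta.

Definition adj (M : op) : op := map_mx Num.conj (M^T).

Definition is_orth_proj (P : op) : Prop := P *m P = P /\ adj P = P.

Definition psd (M : op) : Prop :=
  forall v : 'cV[C]_dim, 0 <= ((map_mx Num.conj v^T) *m M *m v) 0 0.

Definition ptrace_rest (M : op) : 'M[C]_d :=
  \matrix_(i, j) \sum_(x : lbl | x ord0 == i) ent M x (upd0 x j).

(* Choi matrix of a quantum channel (factor 0 = input) *)
Definition is_choi_channel (M : op) : Prop :=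
  psd M /\ ptrace_rest M = 1%:M.

End Defs.

From HB Require Import structures.
From mathcomp Require Import all_boot all_order all_algebra all_fingroup.
From mathcomp Require Import ring.
Import Order.TTheory GRing.Theory Num.Theory.
Set Implicit Arguments. Unset Strict Implicit. Unset Printing Implicit Defensive.

(* Write PiT s for the partial transpose of Pi s.  An entry computation shows
   that for s 0 <> 0 <> t 0 the product PiT s * PiT t is PiT (ptcomp s t), times d
   when s^-1 0 = t 0, and for s in Sigma_{a,b} the map t |-> ptcomp s t is a
   bijection from Sigma_{a',b'} onto Sigma_{a,b'}.  Summing, Ctilde^2 = lam Ctilde
   with lam = (d - 1) sum beta_i^2 + (sum beta_i)^2; Ctilde is self-adjoint since
   PiT s^* = PiT s^-1, and its diagonal entry at a suitable basis vector is beta_a^2,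
   so Ctilde is a projection exactly when lam = 1.  A projection is positive, and
   the partial trace of PiT s counts the labellings fixed by s; by Burnside's lemma
   and a stars-and-bars count of the orbits it equals 'C(N + d - 2, N - 1) lam / d
   times the identity, which the normalisation of C_beta turns into lam I. *)

Lemma card_imset_fibers (aT rT1 rT2 : finType) (D : {set aT})
    (f : aT -> rT1) (g : aT -> rT2) :
  {in D &, forall x y, (f x == f y) = (g x == g y)} -> #|f @: D| = #|g @: D|.
Proof.
move=> fg; case: (set_0Vmem D) => [-> | [x0 x0D]]; first by rewrite !imset0 !cards0.
pose s u := odflt x0 [pick x in D | f x == u].
have sP u : u \in f @: D -> s u \in D /\ f (s u) = u.
  case/imsetP=> x xD ->; rewrite /s; case: pickP => [y /andP[yD /eqP] //|].
  by move/(_ x); rewrite xD eqxx.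
have -> : g @: D = (g \o s) @: (f @: D).
  apply/setP=> v; apply/imsetP/imsetP => [[x xD ->] | [u uf ->]].
    have [sD fs] := sP _ (imset_f f xD).
    by exists (f x); rewrite ?imset_f //=; apply/eqP; rewrite eq_sym -fg // fs.
  by have [sD _] := sP _ uf; exists (s u).
symmetry; apply: card_in_imset => u v uf vf /= /eqP.
have [suD fsu] := sP _ uf; have [svD fsv] := sP _ vf.
by rewrite -fg // fsu fsv => /eqP.
Qed.

Section Relabel.
Variables T U : finType.
Implicit Types (x : {ffun T -> U}) (r : {perm T}).

Definition relabel x r : {ffun T -> U} := [ffun t => x ((r^-1)%g t)].

Lemma relabel1 : relabel^~ 1%g =1 id.
Proof. by move=> x; apply/ffunP=> t; rewrite ffunE invg1 perm1. Qed.

Lemma relabelM x : act_morph relabel x.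
Proof. by move=> r r'; apply/ffunP=> t; rewrite !ffunE invMg permM. Qed.

Definition relabel_action := TotalAction relabel1 relabelM.

End Relabel.

Section OrbitCount.
Variables (T : finType) (n : nat) (A : {set T}) (z : {ffun T -> 'I_n.+1}).
Local Notation to := (relabel_action T 'I_n.+1).
Implicit Types x y : {ffun T -> 'I_n.+1}.

Definition agree_off : {set {ffun T -> 'I_n.+1}} :=
  [set x : {ffun T -> 'I_n.+1} | [forall t, (t \notin A) ==> (x t == z t)]].

Lemma acts_Sym_agree_off : [acts Sym A, on agree_off | to].
Proof.
apply/actsP => r; rewrite inE => rA x; rewrite !inE /=.
apply: eq_forallb => t; case: (boolP (t \in A)) => //= tA.
by rewrite ffunE (out_perm (perm_onV rA) tA).
Qed.

Local Notation eA := (enum_tuple A).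

(* A complete invariant of the [Sym A]-orbits on [agree_off]. *)
Definition sorted_values x : #|A|.-tuple 'I_n.+1 :=
  [tuple of sort <=%O (map_tuple x eA)].

Lemma sorted_values_relabel x r : r \in Sym A ->
  sorted_values (relabel x r) = sorted_values x.
Proof.
rewrite inE => rA; apply: val_inj => /=.
apply/(perm_sortP le_total le_trans le_anti).
have -> : map (relabel x r) eA = map x (map (r^-1)%g eA).
  by rewrite -map_comp; apply: eq_map => t; rewrite /= ffunE.
apply: perm_map; apply: uniq_perm => [||t].
- by rewrite map_inj_uniq; [exact: enum_uniq | exact: perm_inj].
- exact: enum_uniq.
rewrite -[t \in enum_tuple A]/(t \in enum A) mem_enum; apply/mapP/idP => [[u] | tA].
  by rewrite mem_enum => uA ->; rewrite perm_closed //; apply: perm_onV.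
by exists (r t); rewrite ?permK // mem_enum perm_closed.
Qed.

Let enum_pos t : option 'I_#|A| := insub (index t eA).

Lemma enum_pos_mem t : t \in A -> exists2 i, enum_pos t = Some i & t = tnth eA i.
Proof.
move=> tA; have ti : (index t eA < #|A|)%N.
  by rewrite -[X in (_ < X)%N](size_tuple eA) index_mem mem_enum.
exists (Ordinal ti); first by rewrite /enum_pos insubT; congr Some; apply: val_inj.
by rewrite (tnth_nth t) /= nth_index // mem_enum.
Qed.

Lemma enum_pos_notin t : t \notin A -> enum_pos t = None.
Proof.
move=> tA; rewrite /enum_pos insubF //; apply/negbTE; rewrite -leqNgt.
by rewrite -[X in (X <= _)%N](size_tuple eA) memNindex ?mem_enum.
Qed.

Lemma enum_pos_tnth i : enum_pos (tnth eA i) = Some i.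
Proof.
by rewrite /enum_pos (tnth_nth (tnth eA i)) index_uniq ?size_tuple ?enum_uniq ?valK.
Qed.

Let lift_enum_perm (p : 'S_#|A|) t : T :=
  if enum_pos t is Some i then tnth eA (p i) else t.

Lemma lift_enum_perm_inj p : injective (lift_enum_perm p).
Proof.
have eAA i : tnth eA i \in A by rewrite -mem_enum mem_tnth.
have eA_inj : injective (tnth eA) by apply/tuple_uniqP; apply: enum_uniq.
move=> t1 t2; rewrite /lift_enum_perm.
case: (boolP (t1 \in A)) => h1; case: (boolP (t2 \in A)) => h2.
- have [i1 -> ->] := enum_pos_mem h1; have [i2 -> ->] := enum_pos_mem h2.
  by move/eA_inj/perm_inj => ->.
- have [i1 -> _] := enum_pos_mem h1; rewrite enum_pos_notin // => e.
  by move: h2; rewrite -e eAA.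
- have [i2 -> _] := enum_pos_mem h2; rewrite enum_pos_notin // => e.
  by move: h1; rewrite e eAA.
- by rewrite !enum_pos_notin.
Qed.

Lemma sorted_values_orbit x y : x \in agree_off -> y \in agree_off ->
  sorted_values x = sorted_values y -> y \in orbit to (Sym A) x.
Proof.
rewrite !inE => /forallP xz /forallP yz /(congr1 val) /=.
move/(perm_sortP le_total le_trans le_anti); rewrite perm_sym.
case/tuple_permP=> p xyp.
have {}xyp : map_tuple y eA = [tuple tnth (map_tuple x eA) (p i) | i < #|A|].
  exact: val_inj.
apply/orbitP; exists (perm (@lift_enum_perm_inj p))^-1%g.
  rewrite inE; apply: perm_onV; apply/subsetP => t; rewrite inE permE.
  by apply: contraR => tA; rewrite /lift_enum_perm enum_pos_notin.
apply/ffunP => t; rewrite ffunE invgK permE /lift_enum_perm.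
case: (boolP (t \in A)) => tA.
  have [i -> ->] := enum_pos_mem tA.
  by have := congr1 (fun u => tnth u i) xyp; rewrite !tnth_map tnth_ord_tuple => ->.
by rewrite enum_pos_notin //; move: (xz t) (yz t); rewrite tA => /eqP -> /eqP ->.
Qed.

Lemma sorted_values_agree_off :
  sorted_values @: agree_off = [set s : #|A|.-tuple _ | sorted leq (map val s)].
Proof.
apply/setP => s; rewrite inE sorted_map; apply/imsetP/idP => [[x _ ->] | ss].
  exact: (sort_sorted le_total).
pose x := [ffun t => if enum_pos t is Some i then tnth s i else z t].
exists x.
  by rewrite inE; apply/forallP => t; apply/implyP => tA; rewrite ffunE enum_pos_notin.
have xs : map_tuple x eA = s.
  by apply: eq_from_tnth => i; rewrite tnth_map ffunE enum_pos_tnth.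
apply: val_inj; move/(congr1 val): xs => /= ->.
by rewrite sorted_sort //; apply: le_trans.
Qed.

Lemma card_orbits_agree_off :
  #|orbit to (Sym A) @: agree_off| = 'C(#|A| + n, #|A|).
Proof.
rewrite -card_sorted_tuples -sorted_values_agree_off.
apply: card_imset_fibers => x y xX yX; apply/eqP/eqP => [/orbit_eqP yx | ].
  by case/orbitP: yx => r rA <-; rewrite sorted_values_relabel.
by move=> xy; apply/orbit_eqP; apply: sorted_values_orbit.
Qed.

Lemma sum_card_stab_agree_off :
  (\sum_(x in agree_off) #|('C_(Sym A)[x | to])%g|)%N = ('C(#|A| + n, #|A|) * #|A|`!)%N.
Proof.
have cardI (U : finType) (B C : {set U}) : #|B :&: C| = (\sum_(u in B) (u \in C))%N.
  rewrite -sum1_card big_mkcond [RHS]big_mkcond /=; apply: eq_bigr => u _.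
  by rewrite inE; case: (u \in B); case: (u \in C).
rewrite -card_orbits_agree_off -card_Sym -Frobenius_Cauchy ?acts_Sym_agree_off //.
under eq_bigr do rewrite cardI.
rewrite exchange_big; apply: eq_bigr => a _; rewrite cardI; apply: eq_bigr => x _.
by congr nat_of_bool; apply/astab1P/afix1P.
Qed.

End OrbitCount.

Local Open Scope ring_scope.

Lemma permV_eq (T : finType) (s : {perm T}) k v : ((s^-1)%g k == v) = (k == s v).
Proof. by rewrite -(inj_eq (@perm_inj _ s)) permKV. Qed.

Lemma permV_fix (T : finType) (s : {perm T}) v : ((s^-1)%g v == v) = (s v == v).
Proof. by rewrite permV_eq eq_sym. Qed.

Lemma perm_eqV (T : finType) (s : {perm T}) k v : (s k == v) = (k == (s^-1)%g v).
Proof. by rewrite -permV_eq invgK. Qed.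

Lemma tperm_eqR (T : finType) (u v k : T) : (tperm u v k == v) = (k == u).
Proof. by rewrite -(inj_eq (@perm_inj _ (tperm u v))) tpermK tpermR. Qed.

Section Entries.
Variables (C : numClosedFieldType) (d N : nat).
Local Notation lbl := (lbl d N).
Local Notation op := (op C d N).
Local Notation ent := (@ent C d N).
Implicit Types (M : op) (x y : lbl).

Lemma ent_mkop f x y : ent (mkop f) x y = f x y.
Proof. by rewrite /ent /mkop mxE !enum_rankK. Qed.

Lemma entP M M' : ent M =2 ent M' <-> M = M'.
Proof.
split=> [eMM' | -> //]; apply/matrixP => i j.
by have := eMM' (enum_val i) (enum_val j); rewrite /ent !enum_valK.
Qed.

Lemma ent_mul M M' x y : ent (M *m M') x y = \sum_z ent M x z * ent M' z y.
Proof.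
rewrite /ent mxE (reindex (@enum_rank _)) //=.
by exists enum_val => i _; [apply: enum_rankK | apply: enum_valK].
Qed.

Lemma ent_sum I (r : seq I) (P : pred I) (F : I -> op) x y :
  ent (\sum_(i <- r | P i) F i) x y = \sum_(i <- r | P i) ent (F i) x y.
Proof. by rewrite /ent summxE. Qed.

Lemma entZ c M x y : ent (c *: M) x y = c * ent M x y.
Proof. by rewrite /ent mxE. Qed.

Lemma ent_adj M x y : ent (adj M) x y = (ent M y x)^*.
Proof. by rewrite /ent /adj !mxE. Qed.

Lemma adj_sum I (r : seq I) (P : pred I) (F : I -> op) :
  adj (\sum_(i <- r | P i) F i) = \sum_(i <- r | P i) adj (F i).
Proof.
apply/entP => x y; rewrite ent_adj !ent_sum rmorph_sum.
by apply: eq_bigr => i _; rewrite ent_adj.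
Qed.

Lemma adjZ c M : adj (c *: M) = c^* *: adj M.
Proof. by apply/entP => x y; rewrite ent_adj !entZ ent_adj rmorphM. Qed.

Lemma ptrace_sum I (r : seq I) (P : pred I) (F : I -> op) :
  ptrace_rest (\sum_(i <- r | P i) F i) = \sum_(i <- r | P i) ptrace_rest (F i).
Proof.
apply/matrixP => i j; rewrite !mxE summxE.
under eq_bigr => x _ do rewrite ent_sum.
by rewrite exchange_big; apply: eq_bigr => k _; rewrite mxE.
Qed.

Lemma ptraceZ c M : ptrace_rest (c *: M) = c *: ptrace_rest M.
Proof.
by apply/matrixP => i j; rewrite !mxE mulr_sumr; apply: eq_bigr => x _; rewrite entZ.
Qed.

End Entries.

Section PartialTransposedPi.
Variables (C : numClosedFieldType) (d N : nat).
Local Notation lbl := (lbl d N).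
Local Notation op := (op C d N).
Local Notation ent := (@ent C d N).
Local Notation o := (ord0 : 'I_N.+1).
Implicit Types (s t : 'S_N.+1) (x y z : lbl).

Definition PiT s : op := ptrans0 (@Pi C d N s).

Definition piT s x y : bool := upd0 x (y o) == relabel (upd0 y (x o)) s.

Lemma ent_PiT s x y : ent (PiT s) x y = (piT s x y)%:R.
Proof. by rewrite /PiT /ptrans0 ent_mkop /Pi ent_mkop. Qed.

Definition piT_spec s x y : Prop :=
  [/\ x (s o) = x o, y ((s^-1)%g o) = y o &
      forall k, k != o -> k != s o -> x k = y ((s^-1)%g k)].

Lemma piTP s x y : s o != o -> reflect (piT_spec s x y) (piT s x y).
Proof.
move=> s0; have sV0 : (s^-1)%g o != o by rewrite permV_fix.
apply: (iffP eqP) => [xy | [xs0 ysV0 xyk]].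
  have {}xy k : upd0 x (y o) k = upd0 y (x o) ((s^-1)%g k).
    by rewrite [LHS](congr1 (fun f : lbl => f k) xy) ffunE.
  split=> [|| k k0 ks].
  - by have := xy (s o); rewrite !ffunE permK (negbTE s0) eqxx.
  - by have := xy o; rewrite !ffunE eqxx (negbTE sV0).
  - by have := xy k; rewrite !ffunE permV_eq (negbTE k0) (negbTE ks).
apply/ffunP => k; rewrite !ffunE permV_eq.
have [-> | k0] := eqVneq k o; first by rewrite eq_sym (negbTE s0) ysV0.
by have [-> | ks] := eqVneq k (s o); [rewrite xs0 | exact: xyk].
Qed.

Lemma piT_inv s x y : s o != o -> piT (s^-1)%g x y = piT s y x.
Proof.
move=> s0; have sV0 : (s^-1)%g o != o by rewrite permV_fix.
apply/(piTP _ _ sV0)/(piTP _ _ s0); rewrite /piT_spec invgK.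
  case=> ysV0 xs0 xyk; split=> // k k0 ks.
  by rewrite xyk ?permV_eq ?permKV.
case=> ys0 xsV0 yxk; split=> // k k0 ks.
rewrite yxk ?permK ?(inj_eq perm_inj) //.
by apply: contra ks => /eqP <-; rewrite permK.
Qed.

(* Contracting the factor-0 legs of [PiT s] and [PiT t] leaves, up to a scalar,
   [PiT (ptcomp s t)]. *)
Definition ptcomp s t : 'S_N.+1 :=
  (t * tperm ((s^-1)%g o) (t o) * s * tperm o (s o))%g.

Lemma ptcomp0 s t : s o != o -> t o != o -> ptcomp s t o = s o.
Proof. by move=> s0 t0; rewrite /ptcomp !permM tpermR permKV tpermL. Qed.

Lemma ptcompP s t x y : s o != o -> t o != o ->
  reflect [/\ x (s o) = x o, y ((t^-1)%g o) = y o &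
              forall j, j != o -> j != (s^-1)%g o ->
                x (s j) = y ((t^-1)%g (tperm ((s^-1)%g o) (t o) j))]
          (piT (ptcomp s t) x y).
Proof.
move=> s0 t0; have sV0 : (s^-1)%g o != o by rewrite permV_fix.
have compV k : k != o -> k != s o ->
    ((ptcomp s t)^-1)%g k = (t^-1)%g (tperm ((s^-1)%g o) (t o) ((s^-1)%g k)).
  by move=> k0 ks; rewrite /ptcomp !invMg !tpermV !permM (@tpermD _ o (s o) k) 1?eq_sym.
have compV0 : ((ptcomp s t)^-1)%g o = (t^-1)%g o.
  by rewrite /ptcomp !invMg !tpermV !permM tpermL permK tpermD // eq_sym.
have r0 : ptcomp s t o != o by rewrite ptcomp0.
apply: (iffP (piTP _ _ r0)); rewrite /piT_spec ptcomp0 // compV0.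
  case=> xs0 yt0 xy; split=> // j j0 jB.
  by rewrite xy ?compV ?perm_eqV ?permK.
case=> xs0 yt0 xy; split=> // k k0 ks.
by rewrite compV // -xy ?permV_eq ?permKV.
Qed.

Definition mid s x (w : 'I_d) : lbl :=
  [ffun j => if (j == o) || (j == (s^-1)%g o) then w else x (s j)].

Lemma piT_mid s x z : s o != o -> piT s x z = (x (s o) == x o) && (z == mid s x (z o)).
Proof.
move=> s0; apply/(piTP _ _ s0)/andP => [[xs0 zsV0 xz] | [/eqP xs0 /eqP zE]].
  split; first exact/eqP.
  apply/eqP/ffunP => j; rewrite ffunE.
  have [-> // | j0] := eqVneq j o; have [-> // | jB] /= := eqVneq j _.
  by rewrite xz ?permK // ?perm_eqV ?permK.
split=> // [|k k0 ks]; first by rewrite zE !ffunE !eqxx orbT.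
by rewrite zE ffunE permV_eq (negbTE ks) -perm_eqV permKV (negbTE k0).
Qed.

Lemma piT_mid_comp s t x y w : s o != o -> t o != o -> x (s o) = x o ->
  piT t (mid s x w) y =
  (((s^-1)%g o == t o) || (w == x (s (t o)))) && piT (ptcomp s t) x y.
Proof.
move=> s0 t0 xs0; set B := (s^-1)%g o.
have B0 : B != o by rewrite permV_fix.
have midE j : mid s x w j = if (j == o) || (j == B) then w else x (s j).
  by rewrite ffunE.
have midt0 : mid s x w (t o) = if B == t o then w else x (s (t o)).
  by rewrite midE (negbTE t0) eq_sym.
apply/(piTP _ _ t0)/andP => [[zt0 yt0 zy] | [Bw /(ptcompP _ _ s0 t0) [_ yt0 xy]]].
  have Bw : (B == t o) || (w == x (s (t o))).
    by move: zt0; rewrite midt0 midE eqxx /=; case: (B == t o) => //= ->.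
  split=> //; apply/(ptcompP _ _ s0 t0); split=> // j j0 jB.
  have [jt0 | jt0] := eqVneq j (t o).
    have Bto : B != t o by rewrite -jt0 eq_sym.
    rewrite jt0 tpermR -zy // midE (negbTE B0) eqxx orbT.
    by move: Bw; rewrite (negbTE Bto) => /eqP.
  by rewrite tpermD 1?eq_sym // -zy // midE (negbTE j0) (negbTE jB).
split=> //; first by move: Bw; rewrite midt0 midE eqxx /=; case: (B == t o) => //= /eqP.
move=> k k0 kt0; rewrite midE (negbTE k0) /=.
have [kB | kB] := eqVneq k B.
  have Bto : B != t o by rewrite -kB.
  move: Bw; rewrite (negbTE Bto) /= => /eqP ->.
  rewrite xy ?tpermR ?kB // eq_sym //.
by rewrite xy // tpermD // eq_sym.
Qed.

Lemma sum_mid s x (F : lbl -> nat) :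
  (\sum_(z : lbl) (z == mid s x (z o)) * F z = \sum_(w : 'I_d) F (mid s x w))%N.
Proof.
have midK w : mid s x w o = w by rewrite ffunE eqxx.
transitivity (\sum_z \sum_w (z == mid s x w) * F z)%N.
  apply: eq_bigr => z _; rewrite (bigD1 (z o)) //= big1 ?addn0 // => w wz.
  by case: eqP => // zw; move: wz; rewrite zw midK eqxx.
rewrite exchange_big; apply: eq_bigr => w _.
by rewrite (bigD1 (mid s x w)) //= eqxx mul1n big1 ?addn0 // => z /negbTE ->.
Qed.

Lemma sum_piT_mul s t x y : s o != o -> t o != o ->
  (\sum_(z : lbl) (piT s x z && piT t z y))%N =
  ((if (s^-1)%g o == t o then d else 1) * piT (ptcomp s t) x y)%N.
Proof.
move=> s0 t0; have [xs0 | xs0] := eqVneq (x (s o)) (x o); last first.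
  rewrite big1 => [|z _]; last by rewrite piT_mid // (negbTE xs0).
  by case: (ptcompP x y s0 t0) => [[/eqP] | _]; rewrite ?muln0 // (negbTE xs0).
under eq_bigr => z _ do rewrite piT_mid // xs0 eqxx -mulnb.
rewrite sum_mid; under eq_bigr => w _ do rewrite piT_mid_comp //.
case: (piT (ptcomp s t) x y); last by rewrite muln0 big1 // => w _; rewrite andbF.
under eq_bigr => w _ do rewrite andbT.
case: ifP => _ /=; first by rewrite sum1_card card_ord muln1.
by rewrite muln1 (bigD1 (x (s (t o)))) //= eqxx big1 // => w /negbTE ->.
Qed.

Lemma PiT_mul s t : s o != o -> t o != o ->
  PiT s *m PiT t = (if (s^-1)%g o == t o then d%:R else 1) *: PiT (ptcomp s t).
Proof.
move=> s0 t0; apply/entP => x y; rewrite ent_mul entZ ent_PiT.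
under eq_bigr => z _ do rewrite !ent_PiT -natrM mulnb.
by rewrite -natr_sum sum_piT_mul // natrM; case: ifP.
Qed.
End PartialTransposedPi.

Section Sigma.
Variable N : nat.
Local Notation o := (ord0 : 'I_N.+1).
Implicit Types (s t u : 'S_N.+1) (a b : 'I_N).

Lemma lift_neq0 (i : 'I_N) : lift o i != o.
Proof. by rewrite eq_sym neq_lift. Qed.

Definition Sigma a b : {set 'S_N.+1} :=
  [set s : 'S_N.+1 | (s o == lift o a) && (s (lift o b) == o)].

Lemma Sigma0 a b s : s \in Sigma a b -> s o = lift o a.
Proof. by rewrite inE => /andP[/eqP]. Qed.

Lemma SigmaV0 a b s : s \in Sigma a b -> (s^-1)%g o = lift o b.
Proof. by rewrite inE => /andP[_ sb]; apply/eqP; rewrite permV_eq eq_sym. Qed.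

Lemma Sigma_neq0 a b s : s \in Sigma a b -> s o != o.
Proof. by move/Sigma0 ->; apply: lift_neq0. Qed.

Lemma SigmaV a b s : ((s^-1)%g \in Sigma b a) = (s \in Sigma a b).
Proof. by rewrite !inE !permV_eq andbC eq_sym [o == _]eq_sym. Qed.

Definition fix0 (A : 'I_N.+1) : {set 'I_N.+1} := [set~ o] :\ A.

Lemma card_fix0 A : A != o -> #|fix0 A| = N.-1.
Proof.
move=> A0; have := cardsD1 A [set~ o].
by rewrite cardsC1 card_ord !inE A0 add1n /= => NE; rewrite [in RHS]NE.
Qed.

Lemma perm_on_fix0 A u : A != o -> perm_on (fix0 A) u = (u o == o) && (u A == A).
Proof.
move=> A0; apply/idP/andP => [uA | [/eqP u0 /eqP uA]].
  by split; apply/eqP; apply: (out_perm uA); rewrite !inE ?eqxx ?andbF ?andbT.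
apply/subsetP => k; rewrite !inE; apply: contraR.
by rewrite negb_and !negbK => /orP[] /eqP ->; rewrite ?u0 ?uA eqxx.
Qed.

Definition from_fix0 (A B : 'I_N.+1) u := (tperm A B * u * tperm o A)%g.

Lemma from_fix0_inj A B : injective (from_fix0 A B).
Proof. by move=> u v /mulIg /mulgI. Qed.

Lemma from_fix0_Sigma a b u :
  (from_fix0 (lift o a) (lift o b) u \in Sigma a b) = perm_on (fix0 (lift o a)) u.
Proof.
have A0 := lift_neq0 a.
have B0 := lift_neq0 b.
rewrite perm_on_fix0 // inE /from_fix0 !permM tpermR (@tpermD _ _ _ o) //.
by rewrite tperm_eqR -tpermC tperm_eqR.
Qed.

Lemma card_Sigma a b : #|Sigma a b| = (N.-1)`!.
Proof.
have A0 := lift_neq0 a.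
rewrite -(card_fix0 A0) -card_perm -!sum1_card.
rewrite (reindex_inj (@from_fix0_inj (lift o a) (lift o b))) /=.
by apply: eq_bigl => u; rewrite from_fix0_Sigma.
Qed.

Lemma sum_Sigma_ptcomp (V : nmodType) a b a' b' s (F : 'S_N.+1 -> V) :
  s \in Sigma a b ->
  \sum_(t in Sigma a' b') F (ptcomp s t) = \sum_(u in Sigma a b') F u.
Proof.
move=> sS; set h := (tperm (lift o b) (lift o a') * s * tperm o (lift o a))%g.
have A0 := lift_neq0 a.
have B0 := lift_neq0 b.
have A'0 : lift o a' != o by rewrite eq_sym neq_lift.
have sB : s (lift o b) = o by rewrite -(SigmaV0 sS) permKV.
have hA : h (lift o a') = lift o a by rewrite /h !permM tpermR sB tpermL.
have h0 : h o = o.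
  by rewrite /h !permM (@tpermD _ _ _ o) 1?eq_sym // (Sigma0 sS) tpermR.
have hA' v : (h v == lift o a) = (v == lift o a') by rewrite -hA (inj_eq perm_inj).
have h0' v : (h v == o) = (v == o) by rewrite -{1}h0 (inj_eq perm_inj).
rewrite [RHS](reindex_inj (mulIg h)); apply: eq_big => t.
  by rewrite !inE !(permM t h) hA' h0'.
by move=> tS; rewrite /ptcomp (SigmaV0 sS) (Sigma0 tS) (Sigma0 sS) !mulgA.
Qed.

End Sigma.

Section Ctilde.
Variables (C : numClosedFieldType) (d N : nat) (beta : 'I_N -> C).
Local Notation lbl := (lbl d N).
Local Notation op := (op C d N).
Local Notation ent := (@ent C d N).
Local Notation PiT := (@PiT C d N).
Local Notation o := (ord0 : 'I_N.+1).
Local Notation Ct := (Ctilde d beta).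
Implicit Types (a b : 'I_N) (s : 'S_N.+1).

Definition coef a b : C := beta a * beta b / (N.-1)`!%:R.

Definition PiT_Sigma a b : op := \sum_(s in Sigma a b) PiT s.

Definition lam : C :=
  (d%:R - 1) * (\sum_(i < N) beta i ^+ 2) + (\sum_(i < N) beta i) ^+ 2.

Lemma fact_neq0 : (N.-1)`!%:R != 0 :> C.
Proof. by rewrite pnatr_eq0 -lt0n fact_gt0. Qed.

Lemma CtildeE : Ct = \sum_a \sum_b coef a b *: PiT_Sigma a b.
Proof.
apply: eq_bigr => a _; apply: eq_bigr => b _; rewrite scaler_sumr.
by apply: eq_bigl => s; rewrite inE.
Qed.

Lemma PiT_Sigma_mul a b a' b' :
  PiT_Sigma a b *m PiT_Sigma a' b' =
  ((N.-1)`!%:R * (if b == a' then d%:R else 1)) *: PiT_Sigma a b'.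
Proof.
rewrite mulmx_suml -scalerA scaler_nat -(card_Sigma a b) -sumr_const.
apply: eq_bigr => s sS; rewrite mulmx_sumr /PiT_Sigma scaler_sumr.
rewrite -(sum_Sigma_ptcomp a' b' (fun u => _ *: PiT u) sS).
apply: eq_bigr => t tS; rewrite PiT_mul ?(Sigma_neq0 sS) ?(Sigma_neq0 tS) //.
by rewrite (SigmaV0 sS) (Sigma0 tS) (inj_eq lift_inj).
Qed.

Lemma lamE : \sum_b \sum_a beta b * beta a * (if b == a then d%:R else 1) = lam.
Proof.
transitivity (\sum_b (beta b * \sum_a beta a + (d%:R - 1) * beta b ^+ 2)).
  apply: eq_bigr => b _; rewrite mulr_sumr (bigD1 b) //= [in RHS](bigD1 b) //=.
  rewrite eqxx (eq_bigr (fun a => beta b * beta a)) => [|a ab]; first by ring.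
  by rewrite eq_sym (negbTE ab) mulr1.
by rewrite big_split /= -mulr_suml -mulr_sumr /lam expr2 addrC.
Qed.

Lemma coef_conv a b' :
  \sum_b \sum_a' coef a b * coef a' b' * ((N.-1)`!%:R * (if b == a' then d%:R else 1))
  = lam * coef a b'.
Proof.
rewrite -lamE !mulr_suml; apply: eq_bigr => b _; rewrite mulr_suml.
by apply: eq_bigr => a' _; rewrite /coef; field; apply: fact_neq0.
Qed.

Lemma Ctilde_sq : Ct *m Ct = lam *: Ct.
Proof.
rewrite CtildeE mulmx_suml scaler_sumr; apply: eq_bigr => a _.
rewrite mulmx_suml scaler_sumr.
under eq_bigr => b _ do rewrite mulmx_sumr.
under eq_bigr => b _ do under eq_bigr => a' _ do rewrite mulmx_sumr.
under eq_bigr => b _ do under eq_bigr => a' _ do under eq_bigr => b' _ do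
  rewrite -scalemxAl -scalemxAr PiT_Sigma_mul !scalerA.
under eq_bigr => b _ do rewrite exchange_big /=.
rewrite exchange_big /=; apply: eq_bigr => b' _.
rewrite scalerA -coef_conv scaler_suml.
by apply: eq_bigr => b _; rewrite scaler_suml.
Qed.

Lemma adj_PiT s : s o != o -> adj (PiT s) = PiT (s^-1)%g.
Proof.
by move=> s0; apply/entP => x y; rewrite ent_adj !ent_PiT conjC_nat piT_inv.
Qed.

Lemma adj_PiT_Sigma a b : adj (PiT_Sigma a b) = PiT_Sigma b a.
Proof.
rewrite adj_sum /PiT_Sigma (reindex_inj (@invg_inj _)) /=.
apply: eq_big => s; first by rewrite SigmaV.
by move=> sS; rewrite (@adj_PiT (s^-1)%g) ?invgK // (Sigma_neq0 sS).
Qed.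

Lemma adj_Ctilde : (forall i, beta i \is Num.real) -> adj Ct = Ct.
Proof.
move=> breal; rewrite CtildeE adj_sum exchange_big /=; apply: eq_bigr => b _.
rewrite adj_sum; apply: eq_bigr => a _; rewrite adjZ adj_PiT_Sigma.
congr (_ *: _); rewrite conj_Creal /coef; first by rewrite [beta a * _]mulrC.
by rewrite rpred_div ?rpredM ?breal ?realn.
Qed.

Section DiagonalEntry.
Variables (u v : 'I_d).
Hypothesis uv : u != v.

Definition two_valued (c : 'I_N) : lbl :=
  [ffun k => if (k == o) || (k == lift o c) then u else v].

Lemma piT_two_valued c s : s o != o ->
  piT s (two_valued c) (two_valued c) = (s o == lift o c) && ((s^-1)%g o == lift o c).
Proof.
move=> s0; have sV0 : (s^-1)%g o != o by rewrite permV_fix.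
have uvE (b : bool) : ((if b then u else v) == u) = b.
  by case: b; rewrite ?eqxx // eq_sym (negbTE uv).
apply/(piTP _ _ s0)/andP => [[e1 e2 _] | [/eqP e1 /eqP e2]].
  move: e1 e2; rewrite !ffunE eqxx (negbTE s0) (negbTE sV0) /=.
  by move=> /eqP; rewrite uvE => -> /eqP; rewrite uvE.
split=> [||k k0 ks]; rewrite !ffunE ?e1 ?e2 ?eqxx ?orbT //.
rewrite (negbTE k0) permV_eq (negbTE ks) -[in k == _]e1 (negbTE ks) /=.
by rewrite -e2 (inj_eq perm_inj) (negbTE k0).
Qed.

Lemma ent_PiT_Sigma_two_valued a b c :
  ent (PiT_Sigma a b) (two_valued c) (two_valued c) = ((a == c) && (b == c))%:R *+ (N.-1)`!.
Proof.
rewrite ent_sum -(card_Sigma a b) -sumr_const; apply: eq_bigr => s sS.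
by rewrite ent_PiT piT_two_valued ?(Sigma_neq0 sS) // (Sigma0 sS) (SigmaV0 sS) !(inj_eq lift_inj).
Qed.

Lemma ent_Ctilde_two_valued c : ent Ct (two_valued c) (two_valued c) = beta c ^+ 2.
Proof.
transitivity (\sum_a \sum_b ((a == c) && (b == c))%:R * (coef a b *+ (N.-1)`!)).
  rewrite CtildeE ent_sum; apply: eq_bigr => a _; rewrite ent_sum.
  by apply: eq_bigr => b _; rewrite entZ ent_PiT_Sigma_two_valued !mulrnAr mulr1 mulr_natl.
rewrite (bigD1 c) //= [X in _ + X]big1 => [|a ac]; last first.
  by rewrite big1 // => b _; rewrite (negbTE ac) mul0r.
rewrite addr0 (bigD1 c) //= [X in _ + X]big1 => [|b bc]; last first.
  by rewrite (negbTE bc) andbF mul0r.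
rewrite eqxx mul1r addr0 -mulr_natr /coef.
by field; apply: fact_neq0.
Qed.

End DiagonalEntry.

End Ctilde.

Section PartialTrace.
Variables (C : numClosedFieldType) (n N : nat).
Local Notation d := n.+1.
Local Notation lbl := (lbl d N).
Local Notation PiT_Sigma := (@PiT_Sigma C d N).
Local Notation o := (ord0 : 'I_N.+1).
Local Notation stab A x := #|('C_(Sym A)[x | relabel_action 'I_N.+1 'I_d])%g|.
Implicit Types (a b : 'I_N) (s u : 'S_N.+1) (x : lbl).

Lemma piT_upd0 s x j : piT s x (upd0 x j) = (upd0 x j == relabel x s).
Proof.
rewrite /piT; have -> : upd0 (upd0 x j) (x o) = x.
  by apply/ffunP => k; rewrite !ffunE; case: eqP => // ->.
by rewrite [upd0 x j o]ffunE eqxx.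
Qed.

Lemma upd0_id x : upd0 x (x o) = x.
Proof. by apply/ffunP => k; rewrite ffunE; case: eqP => // ->. Qed.

(* Relabelling preserves the number of factors carrying the value [x o], while
   [upd0 x j] lowers it by one. *)
Lemma relabel_neq_upd0 s x j : j != x o -> upd0 x j != relabel x s.
Proof.
move=> jx; apply/eqP => /(congr1 (fun y : lbl => #|[set k | y k == x o]|)).
have -> : [set k | upd0 x j k == x o] = [set k | x k == x o] :\ o.
  apply/setP => k; rewrite !inE ffunE.
  by have [-> | k0] := eqVneq k o; rewrite ?eqxx ?(negbTE jx) ?(negbTE k0).
have -> : [set k | relabel x s k == x o] = (s^-1)%g @^-1: [set k | x k == x o].
  by apply/setP => k; rewrite !inE ffunE.
rewrite card_preimset; last exact: perm_inj.
by rewrite (cardsD1 o [set k | x k == x o]) inE eqxx add1n; apply: n_Sn.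
Qed.

Lemma relabel_from_fix0 x A B u : x A = x B -> x o = x A ->
  (relabel x (from_fix0 A B u) == x) = (relabel x u == x).
Proof.
move=> xAB x0A.
have fixT (v w : 'I_N.+1) : x v = x w -> relabel x (tperm v w) = x.
  by move=> xvw; apply/ffunP => k; rewrite ffunE tpermV; case: tpermP => // ->.
rewrite /from_fix0 !relabelM fixT //.
apply/eqP/eqP => [| ->]; last exact: fixT.
by move/(congr1 (fun y => relabel y (tperm o A))); rewrite -relabelM tperm2 relabel1 fixT.
Qed.

Lemma sum_Sigma_relabel a b x :
  (\sum_(s in Sigma a b) (relabel x s == x))%N =
  (((x (lift o a) == x o) && (x (lift o b) == x o)) * stab (fix0 (lift o a)) x)%N.
Proof.
have [/andP[/eqP xa /eqP xb] | xab] := boolP (_ && _); last first.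
  rewrite mul0n big1 // => s sS; apply/eqP; rewrite eqb0; apply: contra xab => /eqP xs.
  have xfix k : x ((s^-1)%g k) = x k by rewrite -[in RHS]xs ffunE.
  by rewrite -(Sigma0 sS) -(SigmaV0 sS) -(xfix (s o)) permK xfix !eqxx.
rewrite mul1n -sum1_card (reindex_inj (@from_fix0_inj _ (lift o a) (lift o b))) /=.
rewrite [RHS]big_mkcond [LHS]big_mkcond; apply: eq_bigr => u _.
rewrite from_fix0_Sigma relabel_from_fix0 ?xa ?xb // in_setI inE.
have -> : (u \in 'C[x | relabel_action _ _])%g = (relabel x u == x) by apply/astab1P/eqP.
by case: (perm_on _ u); case: (relabel x u == x).
Qed.

Lemma sum_stab_fix0 A i : A != o ->
  (\sum_(x : lbl | (x o == i) && (x A == i)) stab (fix0 A) x)%N =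
  ('C(N.-1 + n, N.-1) * (N.-1)`!)%N.
Proof.
move=> A0; rewrite -(card_fix0 A0) -(sum_card_stab_agree_off _ [ffun=> i]).
apply: eq_bigl => x; rewrite inE; apply/andP/forallP => [[/eqP x0 /eqP xA] k | xi].
  by rewrite !inE negb_and !negbK ffunE; apply/implyP => /orP[] /eqP ->; apply/eqP.
by split; [have := xi o | have := xi A]; rewrite !inE ?eqxx ?andbF ?andbT ffunE.
Qed.

Definition swap_on (S : {set 'I_N.+1}) (i c : 'I_d) x : lbl :=
  [ffun k => if k \in S then tperm i c (x k) else x k].

Lemma swap_onK S i c : involutive (swap_on S i c).
Proof. by move=> x; apply/ffunP => k; rewrite !ffunE; case: (k \in S); rewrite ?tpermK. Qed.

Lemma stab_swap_on S i c x : stab S (swap_on S i c x) = stab S x.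
Proof.
apply: eq_card => u; rewrite !inE; case: (boolP (perm_on S u)) => //= uS.
rewrite !sub1set !inE; have -> : relabel (swap_on S i c x) u = swap_on S i c (relabel x u).
  by apply/ffunP => k; rewrite !ffunE perm_closed //; apply: perm_onV.
by rewrite (inj_eq (can_inj (swap_onK S i c))).
Qed.

(* Swapping the values [i] and [c] on [fix0 A] preserves stabilizers and trades
   [x B = c] for [x B = i]. *)
Lemma sum_stab_fix0_split A B i : A != o -> B != o -> A != B ->
  (d * \sum_(x : lbl | [&& x o == i, x A == i & x B == i]) stab (fix0 A) x)%N =
  (\sum_(x : lbl | (x o == i) && (x A == i)) stab (fix0 A) x)%N.
Proof.
move=> A0 B0 AB; have BS : B \in fix0 A by rewrite !inE B0 eq_sym AB.
rewrite [RHS](partition_big (fun x : lbl => x B) predT) //=.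
transitivity (\sum_(c : 'I_d)
    \sum_(x : lbl | [&& x o == i, x A == i & x B == i]) stab (fix0 A) x)%N.
  by rewrite sum_nat_const card_ord.
apply: eq_bigr => c _; rewrite [RHS](reindex_inj (can_inj (swap_onK (fix0 A) i c))).
apply: eq_big => [x | x _]; last by rewrite stab_swap_on.
rewrite !ffunE BS !inE eqxx andbF /= eqxx tperm_eqR.
by rewrite -andbA.
Qed.

(* Stated for [d] times the count: for [a != b] the count is the [a = b] value divided by [d]. *)
Lemma count_ptrace_PiT_Sigma a b i j :
  (d * \sum_(s in Sigma a b) \sum_(x : lbl | x o == i) piT s x (upd0 x j))%N =
  ((i == j) * ('C(N.-1 + n, N.-1) * (N.-1)`!) * (if a == b then d else 1))%N.
Proof.
have [<- | ij] := eqVneq i j; last first.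
  rewrite big1 ?muln0 // => s _; rewrite big1 // => x /eqP xi.
  by apply/eqP; rewrite eqb0 piT_upd0 relabel_neq_upd0 // xi eq_sym.
have A0 := lift_neq0 a.
rewrite mul1n exchange_big /=.
transitivity (d * \sum_(x : lbl | [&& x o == i, x (lift o a) == i & x (lift o b) == i])
                    stab (fix0 (lift o a)) x)%N.
  congr (_ * _)%N; rewrite big_mkcond [RHS]big_mkcond; apply: eq_bigr => x _ /=.
  have [xi | //] := eqVneq (x o) i.
  rewrite -xi; under eq_bigr => s _ do rewrite piT_upd0 upd0_id eq_sym.
  by rewrite sum_Sigma_relabel /=; case: (_ && _); rewrite ?mul1n.
have [<- | ab] := eqVneq a b.
  rewrite (eq_bigl (fun x : lbl => (x o == i) && (x (lift o a) == i))) => [|x]; last first.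
    by rewrite andbb.
  by rewrite sum_stab_fix0 // mulnC.
have B0 := lift_neq0 b.
by rewrite sum_stab_fix0_split ?(inj_eq lift_inj) // sum_stab_fix0 // muln1.
Qed.

Lemma ptrace_PiT_Sigma a b :
  ptrace_rest (PiT_Sigma a b) =
  ('C(N.-1 + n, N.-1)%:R * (N.-1)`!%:R / d%:R * (if a == b then d%:R else 1)) *: 1%:M.
Proof.
apply/matrixP => i j; rewrite !mxE.
transitivity (((\sum_(s in Sigma a b) \sum_(x : lbl | x o == i) piT s x (upd0 x j))%N)%:R : C).
  rewrite exchange_big natr_sum; apply: eq_bigr => x _.
  by rewrite ent_sum natr_sum; apply: eq_bigr => s _; rewrite ent_PiT.
have d0 : d%:R != 0 :> C by rewrite pnatr_eq0.
apply: (mulfI d0); rewrite -[LHS]natrM count_ptrace_PiT_Sigma !natrM.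
by case: (i == j); case: (a == b); field; rewrite -mulrS.
Qed.

Lemma ptrace_Ctilde (beta : 'I_N -> C) :
  ptrace_rest (Ctilde d beta) = ('C(N.-1 + n, N.-1)%:R / d%:R * lam d beta) *: 1%:M.
Proof.
rewrite CtildeE ptrace_sum -lamE mulr_sumr scaler_suml; apply: eq_bigr => a _.
rewrite ptrace_sum mulr_sumr scaler_suml; apply: eq_bigr => b _.
rewrite ptraceZ ptrace_PiT_Sigma scalerA /coef; congr (_ *: _).
have f0 : (N.-1)`!%:R != 0 :> C := fact_neq0 C N.
by case: (a == b); field; rewrite -mulrS pnatr_eq0 f0.
Qed.

End PartialTrace.

Section Channel.
Variables (C : numClosedFieldType) (d N : nat).
Local Notation op := (op C d N).

Lemma psd_orth_proj (P : op) : is_orth_proj P -> psd P.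
Proof.
case=> Pidem Padj v.
have -> : map_mx Num.conj v^T *m P *m v = map_mx Num.conj (P *m v)^T *m (P *m v).
  by rewrite trmx_mul map_mxM -[map_mx _ P^T]/(adj P) Padj mulmxA -(mulmxA _ P P) Pidem.
by rewrite mxE sumr_ge0 // => k _; rewrite !mxE mulrC mul_conjC_ge0.
Qed.

Lemma psdZ c (M : op) : 0 <= c -> psd M -> psd (c *: M).
Proof. by move=> c0 Mpsd v; rewrite -scalemxAr -scalemxAl mxE mulr_ge0. Qed.

Lemma Ctilde_orth_proj (beta : 'I_N -> C) : (1 < d)%N ->
  (forall i, beta i \is Num.real) -> (exists a b, beta a * beta b != 0) ->
  is_orth_proj (Ctilde d beta) <-> lam d beta = 1.
Proof.
move=> d_gt1 breal [a [b ab0]]; split=> [[Cidem _] | lam1]; last first.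
  by split; [rewrite Ctilde_sq lam1 scale1r | apply: adj_Ctilde].
have a0 : beta a != 0 by apply: contra ab0 => /eqP ->; rewrite mul0r.
pose u : 'I_d := Ordinal (ltnW d_gt1); pose v : 'I_d := Ordinal d_gt1.
have := congr1 (fun M => ent M (two_valued u v a) (two_valued u v a)) (Ctilde_sq d beta).
rewrite Cidem entZ ent_Ctilde_two_valued // -{1}[beta a ^+ 2]mul1r.
by move/(mulIf (expf_neq0 2 a0)) ->.
Qed.

End Channel.

Lemma mul_bin_pred m n : (0 < m)%N -> ((m + n) * 'C(m.-1 + n, m.-1) = m * 'C(m + n, m))%N.
Proof.
move=> m0; have := mul_bin_diag (m + n) m.-1; rewrite prednK //.
by have -> : (m + n).-1 = (m.-1 + n)%N by rewrite -subn1 addnC -addnBA // addnC subn1.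
Qed.

Lemma ptrace_Cbeta (C : numClosedFieldType) (n N : nat) (beta : 'I_N -> C) : (0 < N)%N ->
  ptrace_rest (Cbeta n.+1 beta) = lam n.+1 beta *: 1%:M.
Proof.
move=> N0; rewrite /Cbeta ptraceZ ptrace_Ctilde scalerA; congr (_ *: _).
have -> : (N + n.+1 - 1 = N + n)%N by rewrite addnS subn1.
have bin0 : 'C(N + n, N)%:R != 0 :> C by rewrite pnatr_eq0 -lt0n bin_gt0 leq_addr.
have N0' : N%:R != 0 :> C by rewrite pnatr_eq0 -lt0n.
have binE := congr1 (GRing.natmul (1 : C)) (mul_bin_pred n N0).
rewrite !natrM in binE.
transitivity ((N + n)%:R * 'C(N.-1 + n, N.-1)%:R / (N%:R * 'C(N + n, N)%:R) * lam n.+1 beta).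
  by field; rewrite bin0 N0' -mulrS pnatr_eq0.
by rewrite binE divff ?mul1r // mulf_neq0.
Qed.

Unset Implicit Arguments.

Theorem mainTheorem11 (C : numClosedFieldType) (d N : nat)
  (hd : (2 <= d)%N) (hN : (1 <= N)%N)
  (beta : 'I_N -> C) (hreal : forall i, beta i \is Num.real)
  (hnz : exists a b, beta a * beta b != 0) :
  (is_orth_proj (Ctilde d beta) <->
     (d%:R - 1) * (\sum_(i < N) beta i ^+ 2) + (\sum_(i < N) beta i) ^+ 2 = 1)
  /\
  ((d%:R - 1) * (\sum_(i < N) beta i ^+ 2) + (\sum_(i < N) beta i) ^+ 2 = 1 ->
     psd (Cbeta d beta) /\ ptrace_rest (Cbeta d beta) = 1%:M
     /\ is_choi_channel (Cbeta d beta)).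
Proof.
have orth := Ctilde_orth_proj hd hreal hnz.
split=> // lam1; case: d hd orth lam1 => [|n] // _ orth.
rewrite -[_ + _]/(lam n.+1 beta) => lam1.
have psdC : psd (Cbeta n.+1 beta).
  by apply: psdZ; [rewrite !mulr_ge0 ?invr_ge0 ?ler0n | apply/psd_orth_proj/orth].
have trC : ptrace_rest (Cbeta n.+1 beta) = 1%:M by rewrite ptrace_Cbeta // lam1 scale1r.
by do !split.
Qed.
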